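(* Fix $c\in(0,1/2)$. Each of the following classes $\mathbb D$ of distributions on $\mathbb R^d\times\mathbb R$ satisfies Condition 3 with constant $c$: (1) (Polynomial log-densities) the class of distributions $\mathcal P$ with $\mathrm{supp}(\mathcal P_X)=\mathbb R^d$ and otherwise arbitrary $x$-marginal $\mathcal P_X$, whose conditional density satisfies $\mathcal P(y\mid x)\propto e^{f_{\mathcal P}(x,y)}$ for some polynomial $f_{\mathcal P}$ in $(x,y)$ (with $\int e^{f_{\mathcal P}(x,y)}dy<\infty$ for all $x$); (2) (Polynomial expectations) the class of distributions $\mathcal P$ with $\mathrm{supp}(\mathcal P_X)=\mathbb R^d$ and otherwise arbitrary $x$-marginal, such that $\mathbb E_{(x,y)\sim\mathcal P}[y\mid X=x]=f_{\mathcal P}(x)$ for some polynomial $f_{\mathcal P}$.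
   Context: For a distribution $\mathcal P$ with density on $\mathbb R^d\times\mathbb R$, $\mathcal P(x,y)$ denotes its density, $\mathcal P_X$ its $x$-marginal and $\mathcal P(y\mid x)$ its conditional density. $\mathrm{vol}$ denotes Lebesgue measure. Condition 3 (constant $c$): for all $\mathcal P,\mathcal Q\in\mathbb D$ with $\mathbb E_{(x,y)\sim\mathcal P}[y]\neq\mathbb E_{(x,y)\sim\mathcal Q}[y]$, either $\mathcal P_X\neq\mathcal Q_X$, or there is no set $S\subseteq\mathbb R^d$ with $\mathrm{vol}(S)\ge c$ such that $\mathcal P(x,y)=\mathcal Q(x,y)$ for all $(x,y)\in S\times\mathbb R$. *)

From HB Require Import structures.
From mathcomp Require Import all_boot all_order all_algebra.
From mathcomp Require Import all_classical all_reals all_analysis.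

Set Implicit Arguments.
Unset Strict Implicit.
Unset Printing Implicit Defensive.
Import Order.TTheory GRing.Theory Num.Theory.
Local Open Scope classical_set_scope.
Local Open Scope ring_scope.

Record mspace (R : realType) := MSpace {
  ms_disp : measure_display;
  ms_car : measurableType ms_disp;
  ms_mu : {measure set ms_car -> \bar R} }.

(* Euclidean space R^n with its Lebesgue measure, built as iterated products:
   R^0 = a point (with the Dirac mass, i.e. 0-dim Lebesgue measure),
   R^(n+1) = R^n * R with the product measure vol_n \x lebesgue_measure. *)
Fixpoint Rsp (R : realType) (n : nat) : mspace R :=
  match n with
  | 0 => @MSpace R _ unit (@dirac _ unit tt R)
  | n'.+1 => @MSpace R _ _
               (ms_mu (Rsp R n') \x (@lebesgue_measure R))%E
  end.

Definition Rn (R : realType) (n : nat) := ms_car (Rsp R n).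
Definition vol (R : realType) (n : nat) : set (Rn R n) -> \bar R := ms_mu (Rsp R n).
Arguments vol : clear implicits.

Local Open Scope ereal_scope.

Section Distributions.
Variables (R : realType) (d : nat).

(* A (candidate) distribution on R^d x R is given by its joint density
   p x y = P(x,y) with respect to Lebesgue measure on R^(d+1). *)
Definition joint (p : Rn R d -> R -> R) : Rn R d.+1 -> R :=
  fun z => p z.1 z.2.

Definition is_density (p : Rn R d -> R -> R) : Prop :=
  (forall x y, (0 <= p x y)%R) /\
  measurable_fun setT (joint p) /\
  \int[vol R d.+1]_z (joint p z)%:E = 1.

Definition law (p : Rn R d -> R -> R) (B : set (Rn R d.+1)) : \bar R :=
  \int[vol R d.+1]_(z in B) (joint p z)%:E.

Definition marginal_law (p : Rn R d -> R -> R) (A : set (Rn R d)) : \bar R :=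
  law p (A `*` setT).

Definition same_marginal (p q : Rn R d -> R -> R) : Prop :=
  forall A, measurable A -> marginal_law p A = marginal_law q A.

Definition marginal_density (p : Rn R d -> R -> R) (x : Rn R d) : \bar R :=
  \int[@lebesgue_measure R]_y (p x y)%:E.

(* supp(P_X) = R^d, read as: the marginal density is positive
   (Lebesgue-)almost everywhere on R^d. *)
Definition full_support (p : Rn R d -> R -> R) : Prop :=
  {ae vol R d, forall x, 0 < marginal_density p x}.

Definition cond_density (p : Rn R d -> R -> R) (x : Rn R d) (y : R) : R :=
  (p x y / fine (marginal_density p x))%R.

Definition mean_y (p : Rn R d -> R -> R) : \bar R :=
  \int[vol R d.+1]_z (z.2 * joint p z)%:E.

Definition has_mean_y (p : Rn R d -> R -> R) : Prop :=
  (vol R d.+1).-integrable setT (fun z => (z.2 * joint p z)%:E).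

Definition cond_mean (p : Rn R d -> R -> R) (x : Rn R d) : R :=
  (fine (\int[@lebesgue_measure R]_y (y * p x y)%:E)
     / fine (marginal_density p x))%R.

End Distributions.

(* Polynomial functions on R^n (R^(n+1) = R^n x R): on R^0 the constants;
   on R^n x R the functions (x,y) |-> sum_{i<k} g_i(x) y^i with each g_i a
   polynomial function on R^n. *)
Fixpoint is_poly (R : realType) (n : nat) : (Rn R n -> R) -> Prop :=
  match n return (Rn R n -> R) -> Prop with
  | 0 => fun f => exists a : R, forall x, f x = a
  | n'.+1 => fun f => exists (k : nat) (g : nat -> Rn R n' -> R),
      (forall i, is_poly (g i)) /\
      (forall z : Rn R n'.+1, f z = \sum_(i < k) (g i z.1 * z.2 ^+ i))%R
  end.

Definition condition3 (R : realType) (d : nat) (c : R)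
    (D : (Rn R d -> R -> R) -> Prop) : Prop :=
  forall p q, D p -> D q ->
    has_mean_y p -> has_mean_y q -> mean_y p <> mean_y q ->
    ~ same_marginal p q \/
    ~ (exists S : set (Rn R d), measurable S /\ c%:E <= vol R d S /\
         (forall x y, S x -> p x y = q x y)).

Definition poly_logdensity_class (R : realType) (d : nat)
    (p : Rn R d -> R -> R) : Prop :=
  is_density p /\ full_support p /\
  exists f : Rn R d.+1 -> R, is_poly f /\
    (forall x : Rn R d,
       \int[@lebesgue_measure R]_y (expR (f (x, y)))%:E < +oo) /\
    {ae vol R d, forall x, forall y,
       cond_density p x y =
       (expR (f (x, y)) /
        fine (\int[@lebesgue_measure R]_y' (expR (f (x, y'))))%:E)%R}.

Definition poly_expectation_class (R : realType) (d : nat)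
    (p : Rn R d -> R -> R) : Prop :=
  is_density p /\ full_support p /\
  exists f : Rn R d -> R, is_poly f /\
    {ae vol R d, forall x,
       (@lebesgue_measure R).-integrable setT (fun y => (y * p x y)%:E) /\
       cond_mean p x = f x}.

(* A polynomial on R^n vanishing on a set of positive measure vanishes
   everywhere: by induction on n its zero set is null, since a nonzero
   polynomial in one variable has finitely many roots.  Let S have positive
   measure with P(x,.) = Q(x,.) for x in S.  For (2), f_P = f_Q on S, hence
   everywhere, and both means equal \int f_P(x) P_X(x) dx.  For (1), equality
   of exp f_P / Z_P and exp f_Q / Z_Q over S makes f_P(x,y) - f_Q(x,y)
   independent of y on S x R, a set of positive measure, hence everywhere. *)

From HB Require Import structures.
From mathcomp Require Import all_boot all_order all_algebra.
From mathcomp Require Import all_classical all_reals all_analysis.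
From mathcomp Require Import measurable_realfun.

Set Implicit Arguments.
Unset Strict Implicit.
Unset Printing Implicit Defensive.
Import Order.TTheory GRing.Theory Num.Theory.
Local Open Scope classical_set_scope.
Local Open Scope ring_scope.

Lemma finite_root_set (R : idomainType) (p : {poly R}) :
  p != 0 -> finite_set [set x | root p x].
Proof.
move: {2}(size p) (leqnn (size p)) => n; elim: n p => [|n IHn] p.
  by rewrite leqn0 size_poly_eq0 => /eqP ->; rewrite eqxx.
move=> sz_p p_neq0.
have [[a /factor_theorem[q pE]]|no_root] := pselect (exists a, root p a); last first.
  by apply: (sub_finite_set _ (finite_set0 R)) => x px; apply: no_root; exists x.
have q_neq0 : q != 0 by apply: contraNneq p_neq0; rewrite pE => ->; rewrite mul0r.
apply: (@sub_finite_set _ _ ([set a] `|` [set x | root q x])).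
  by move=> x; rewrite /= pE rootM root_XsubC => /orP[|/eqP]; [right|left].
rewrite finite_setU; split; first exact: finite_set1.
apply: (IHn q _ q_neq0); move: sz_p.
by rewrite pE size_mul ?polyXsubC_eq0 // size_XsubC addn2.
Qed.

Lemma lebesgue_root_set0 (R : realType) (p : {poly R}) :
  p != 0 -> lebesgue_measure [set x | root p x] = 0%E.
Proof.
by move=> /finite_root_set/finite_set_countable/countable_lebesgue_measure0.
Qed.

Section Polynomials.
Variable R : realType.

Lemma is_poly_ext n (f g : Rn R n -> R) : f =1 g -> is_poly f -> is_poly g.
Proof. by move=> /funext ->. Qed.

Lemma is_poly0 n : is_poly (fun _ : Rn R n => 0).
Proof.
elim: n => [|n IHn] /=; first by exists 0.
by exists 0%N, (fun _ _ => 0); split => [//|z]; rewrite big_ord0.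
Qed.

Lemma is_poly_sub n (f g : Rn R n -> R) :
  is_poly f -> is_poly g -> is_poly (fun x => f x - g x).
Proof.
elim: n f g => [|n IHn] f g /=.
  by move=> [a fa] [b gb]; exists (a - b) => x; rewrite fa gb.
move=> [k [a [a_poly fE]]] [l [b [b_poly gE]]].
pose trunc m (h : nat -> Rn R n -> R) i := if (i < m)%N then h i else fun=> 0.
have trunc_poly m h : (forall i, is_poly (h i)) -> forall i, is_poly (trunc m h i).
  move=> h_poly i; rewrite /trunc.
  by case: ifP => _; [exact: h_poly|exact: is_poly0].
have widen m (h : nat -> Rn R n -> R) (z : Rn R n.+1) : (m <= k + l)%N ->
    \sum_(i < m) h i z.1 * z.2 ^+ i = \sum_(i < k + l) trunc m h i z.1 * z.2 ^+ i.
  move=> le_m; rewrite (big_ord_widen _ (fun i => h i z.1 * z.2 ^+ i) le_m).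
  rewrite big_mkcond; apply: eq_bigr => i _.
  by rewrite /trunc; case: ifP; rewrite ?mul0r.
exists (k + l)%N, (fun i x => trunc k a i x - trunc l b i x); split.
  by move=> i; apply: IHn; apply: trunc_poly.
move=> z; rewrite fE gE (widen k) ?leq_addr // (widen l) ?leq_addl // -sumrB.
by apply: eq_bigr => i _; rewrite mulrBl.
Qed.

Lemma is_poly_fst n (u : Rn R n -> R) :
  is_poly u -> is_poly (fun z : Rn R n.+1 => u z.1).
Proof.
by move=> u_poly; exists 1%N, (fun=> u); split => // z; rewrite big_ord1 mulr1.
Qed.

Lemma is_poly_section0 n (f : Rn R n.+1 -> R) :
  is_poly f -> is_poly (fun x : Rn R n => f (x, 0)).
Proof.
move=> [[|k] [a [a_poly fE]]].
  by apply: is_poly_ext (is_poly0 n) => x; rewrite fE big_ord0.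
apply: is_poly_ext (a_poly 0%N) => x; rewrite fE big_ord_recl /= expr0 mulr1.
by rewrite big1 ?addr0 // => i _; rewrite expr0n mulr0.
Qed.

Lemma measurable_poly n (f : Rn R n -> R) : is_poly f -> measurable_fun setT f.
Proof.
elim: n f => [|n IHn] f /=.
  by move=> [a fa]; rewrite (_ : f = cst a); [exact: measurable_cst|exact/funext].
move=> [k [g [g_poly fE]]]; rewrite (funext fE); apply: measurable_sum => i.
apply: measurable_funM.
  exact: measurableT_comp (IHn _ (g_poly i)) measurable_fst.
exact: measurable_funX measurable_snd.
Qed.

Lemma measurable_poly_zero_set n (f : Rn R n -> R) :
  is_poly f -> measurable [set x | f x = 0].
Proof.
move=> /measurable_poly mf; rewrite -[X in measurable X]setTI.
exact: mf measurableT _ (measurable_set1 0).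
Qed.

End Polynomials.

Local Open Scope ereal_scope.

(* The library proves this only as a section-local [Let] (before
   [product_measure_unique]); it is needed to iterate the product in [vol]. *)
Lemma product_measure1_sigma_finite d1 d2 (T1 : measurableType d1)
    (T2 : measurableType d2) (R : realType)
    (m1 : {sigma_finite_measure set T1 -> \bar R})
    (m2 : {sigma_finite_measure set T2 -> \bar R}) :
  sigma_finite setT (m1 \x m2).
Proof.
have /sigma_finiteP[F [UF ndF Ffin]] := sigma_finiteT m1.
have /sigma_finiteP[G [UG ndG Gfin]] := sigma_finiteT m2.
exists (fun k => F k `*` G k); last first.
  move=> k; have [mF ltF] := Ffin k; have [mG ltG] := Gfin k.
  split; first exact: measurableX.
  by rewrite product_measure1E // lte_mul_pinfty // ge0_fin_numE.
apply/seteqP; split => [[x y] _|]; last by [].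
have [i _ Fix] : (\bigcup_k F k) x by rewrite -UF.
have [j _ Gjy] : (\bigcup_k G k) y by rewrite -UG.
exists (maxn i j) => //; split.
- exact: subsetPset (ndF _ _ (leq_maxl i j)) x Fix.
- exact: subsetPset (ndG _ _ (leq_maxr i j)) y Gjy.
Qed.

Definition sigma_finite_measure_of d (T : measurableType d) (R : realType)
    (m : {measure set T -> \bar R}) (mT : sigma_finite setT m) :
  {sigma_finite_measure set T -> \bar R} :=
  HB.pack_for (SigmaFiniteMeasure.type T R) (Measure.sort m)
    (isSFinite.Build _ _ _ _ (sfinite_measure_sigma_finite mT))
    (isSigmaFinite.Build _ _ _ _ mT).

Section Volume.
Variable R : realType.

Lemma vol_sigma_finite n : sigma_finite setT (vol R n).
Proof.
elim: n => [|n IHn].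
  apply: fin_num_fun_sigma_finite; first by rewrite /vol measure0.
  by move=> A _; rewrite /vol /= diracE; case: (tt \in A).
exact: product_measure1_sigma_finite (sigma_finite_measure_of IHn) lebesgue_measure.
Qed.

Let svol n := sigma_finite_measure_of (vol_sigma_finite n).

Lemma vol_poly_zero_set n (f : Rn R n -> R) :
  is_poly f -> (exists x, f x != 0%R) -> vol R n [set x | f x = 0%R] = 0.
Proof.
elim: n f => [|n IHn] f.
  move=> [a fa] [x]; rewrite fa => a_neq0.
  rewrite (_ : [set x | f x = 0%R] = set0) ?measure0 //.
  by apply/seteqP; split => y //=; rewrite fa => /eqP; rewrite (negbTE a_neq0).
move=> f_poly [z fz_neq0]; have mZ := measurable_poly_zero_set f_poly.
move: f_poly => [k [g [g_poly fE]]].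
have [i ltik gi_neq0] : exists2 i, (i < k)%N & g i z.1 != 0%R.
  apply: contrapT => g0; move: fz_neq0; rewrite fE big1 ?eqxx // => j _.
  have [->|gj_neq0] := eqVneq (g j z.1) 0%R; first by rewrite mul0r.
  by exfalso; apply: g0; exists j.
have gi_null := IHn _ (g_poly i) (ex_intro _ z.1 gi_neq0).
transitivity (\int[vol R n]_x lebesgue_measure (xsection [set z | f z = 0%R] x)).
  by [].
(* Off the null set [g i = 0], the x-section is the root set of a nonzero
   polynomial in y. *)
rewrite (ae_eq_integral (cst 0)) ?integral0 //.
  exact: measurable_fun_xsection.
exists [set x | g i x = 0%R]; split => //.
  exact: measurable_poly_zero_set (g_poly i).
move=> x /= /not_implyP[_ Zx_neq0]; apply: contrapT => gix_neq0; apply: Zx_neq0.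
have -> : xsection [set z | f z = 0%R] x = [set y | root (\poly_(j < k) g j x) y].
  by apply/seteqP; split => y;
    rewrite /xsection /= inE /= /root horner_poly fE => /eqP.
apply: lebesgue_root_set0; apply/eqP => /(congr1 (fun p : {poly R} => p`_i)).
by rewrite coef_poly ltik coef0; exact: gix_neq0.
Qed.

Lemma is_poly_ae_zero n (f : Rn R n -> R) (A : set (Rn R n)) :
  is_poly f -> measurable A -> vol R n A != 0 ->
  {ae vol R n, forall x, A x -> f x = 0%R} -> forall x, f x = 0%R.
Proof.
move=> f_poly mA A_neq0 Af0 x; apply: contrapT => /eqP fx_neq0.
have Z_null : (vol R n).-negligible [set x | f x = 0%R].
  apply/negligibleP; first exact: measurable_poly_zero_set.
  exact: vol_poly_zero_set f_poly (ex_intro _ x fx_neq0).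
have /(negligibleP _ mA) A0 : (vol R n).-negligible A.
  apply: negligibleS (negligibleU Z_null Af0) => a Aa.
  have [fa0|fa_neq0] := eqVneq (f a) 0%R; first by left.
  by right => /(_ Aa) /eqP; rewrite (negbTE fa_neq0).
by move: A_neq0; rewrite /vol A0 eqxx.
Qed.

Lemma vol_setXT n (A : set (Rn R n)) :
  measurable A -> vol R n.+1 (A `*` setT) = vol R n A * +oo.
Proof.
move=> mA; rewrite [LHS](product_measure1E (svol n) lebesgue_measure) //.
congr (_ * _); rewrite -set_itvNyy.
by have /= := lebesgue_measure_itv `]-oo, +oo[%R; apply.
Qed.

Lemma ae_vol_fst n (P : Rn R n -> Prop) :
  {ae vol R n, forall x, P x} -> {ae vol R n.+1, forall z, P z.1}.
Proof.
move=> [N [mN N0 PN]]; exists (N `*` setT); split.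
- exact: measurableX.
- by rewrite vol_setXT // N0 mul0e.
- by move=> z /= Pz_not; split => //; apply: PN.
Qed.

Lemma vol_tonelli n (F : Rn R n.+1 -> \bar R) :
  measurable_fun setT F -> (forall z, 0 <= F z) ->
  \int[vol R n.+1]_z F z = \int[vol R n]_x \int[lebesgue_measure]_y F (x, y).
Proof. exact: (fubini_tonelli1 (m1 := svol n) (m2 := lebesgue_measure)). Qed.

Lemma measurable_vol_tonelli_F n (F : Rn R n.+1 -> \bar R) :
  measurable_fun setT F -> (forall z, 0 <= F z) ->
  measurable_fun setT (fun x => \int[lebesgue_measure]_y F (x, y)).
Proof. exact: (measurable_fun_fubini_tonelli_F (m2 := lebesgue_measure)). Qed.

Lemma vol_fubini n (F : Rn R n.+1 -> \bar R) :
  (vol R n.+1).-integrable setT F ->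
  \int[vol R n.+1]_z F z = \int[vol R n]_x \int[lebesgue_measure]_y F (x, y).
Proof.
move=> iF.
by rewrite (integral12_prod_meas1 (m1 := svol n) (m2 := lebesgue_measure) iF).
Qed.

Lemma measurable_vol_fubini_F n (F : Rn R n.+1 -> \bar R) :
  (vol R n.+1).-integrable setT F ->
  measurable_fun setT (fun x => \int[lebesgue_measure]_y F (x, y)).
Proof. exact: (measurable_fubini_F (m1 := svol n) (m2 := lebesgue_measure)). Qed.

Lemma is_poly_ae_const_snd n (f : Rn R n.+1 -> R) (S : set (Rn R n)) :
  is_poly f -> measurable S -> vol R n S != 0 ->
  {ae vol R n, forall x, S x -> forall y, f (x, y) = f (x, 0%R)} ->
  forall x y, f (x, y) = f (x, 0%R).
Proof.
move=> f_poly mS S_neq0 fS x y.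
suff f0 z : (f z - f (z.1, 0%R) = 0)%R.
  by apply/eqP; rewrite -subr_eq0 (f0 (x, y)).
apply: is_poly_ae_zero (is_poly_sub f_poly (is_poly_fst (is_poly_section0 f_poly)))
  (measurableX mS measurableT) _ _ z.
  by rewrite vol_setXT // gt0_muley // lt0e S_neq0 measure_ge0.
apply: filterS (ae_vol_fst fS) => -[{}x {}y] fSx [/= Sx _].
by rewrite (fSx Sx) subrr.
Qed.

End Volume.

Section Marginals.
Variables (R : realType) (d : nat).
Implicit Types p q : Rn R d -> R -> R.

Lemma marginal_lawE p A : is_density p -> measurable A ->
  marginal_law p A = \int[vol R d]_(x in A) marginal_density p x.
Proof.
move=> [p_ge0 [mp _]] mA.
rewrite /marginal_law /law integral_mkcond vol_tonelli; last 2 first.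
- have mAT : measurable (A `*` [set: R]) by exact: measurableX.
  apply: (measurable_restrictT (fun z : Rn R d.+1 => (joint p z)%:E) mAT).1.
  exact/measurable_funTS/measurable_EFinP.
- by move=> z; rewrite patchE; case: ifPn => // _; rewrite lee_fin; exact: p_ge0.
rewrite [RHS]integral_mkcond; apply: eq_integral => x _; rewrite patchE.
case: ifPn => [/set_mem Ax|xNA].
  by apply: eq_integral => y _; rewrite patchE ifT //; exact/mem_set.
rewrite integral0_eq // => y _; rewrite patchE ifF //; apply/negbTE/negP.
by move=> /set_mem[/= Ax _]; rewrite (mem_set Ax) in xNA.
Qed.

Lemma measurable_marginal_density p :
  is_density p -> measurable_fun setT (marginal_density p).
Proof.
move=> [p_ge0 [mp _]].
apply: (measurable_vol_tonelli_F (F := fun z => (joint p z)%:E)).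
  exact/measurable_EFinP.
by move=> z; rewrite lee_fin; exact: p_ge0.
Qed.

Lemma integrable_marginal_density p :
  is_density p -> (vol R d).-integrable setT (marginal_density p).
Proof.
move=> p_dens; apply/integrableP; split; first exact: measurable_marginal_density.
have m_ge0 x : 0 <= marginal_density p x.
  by case: p_dens => p_ge0 _; apply: integral_ge0 => y _; rewrite lee_fin.
rewrite (eq_integral (marginal_density p)) => [|x _]; last by rewrite gee0_abs.
rewrite -marginal_lawE // /marginal_law /law setXTT.
by case: p_dens => _ [_ ->]; rewrite ltry.
Qed.

(* Since [fine +oo = 0], this also says that the marginal density is finite. *)
Lemma marginal_density_fine_gt0 p : is_density p -> full_support p ->
  {ae vol R d, forall x, (0 < fine (marginal_density p x))%R}.
Proof.
move=> /integrable_marginal_density/(integrable_ae measurableT) m_fin m_gt0.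
apply: filterS2 m_fin m_gt0 => x /(_ I) m_fin m_gt0.
by apply: fine_gt0; rewrite m_gt0 ltey_eq m_fin.
Qed.

Lemma same_marginal_ae p q :
  is_density p -> is_density q -> same_marginal p q ->
  {ae vol R d, forall x, marginal_density p x = marginal_density q x}.
Proof.
move=> p_dens q_dens pq.
have : ae_eq (vol R d) setT (marginal_density p) (marginal_density q).
  apply: integral_ae_eq => //.
  - exact: integrable_marginal_density.
  - exact: measurable_marginal_density.
  - by move=> E _ mE; rewrite -!marginal_lawE // pq.
by apply: filterS => x /(_ I).
Qed.

Lemma same_marginal_ae_pos p q :
  is_density p -> is_density q -> full_support p -> same_marginal p q ->
  {ae vol R d, forall x, marginal_density p x = marginal_density q x /\
                         (0 < fine (marginal_density p x))%R}.
Proof.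
move=> p_dens q_dens p_supp pq.
apply: filterS2 (same_marginal_ae p_dens q_dens pq)
                (marginal_density_fine_gt0 p_dens p_supp) => x.
exact: conj.
Qed.

Lemma cond_densityK p x y : fine (marginal_density p x) != 0%R ->
  (cond_density p x y * fine (marginal_density p x))%R = p x y.
Proof. by move=> m_neq0; rewrite /cond_density divfK. Qed.

Lemma eq_cond_density p q x :
  marginal_density p x = marginal_density q x ->
  (0 < fine (marginal_density p x))%R ->
  cond_density p x =1 cond_density q x -> p x =1 q x.
Proof.
move=> pq_marg m_gt0 pq_cond y; have m_neq0 := lt0r_neq0 m_gt0.
by rewrite -(cond_densityK y m_neq0) pq_cond pq_marg cond_densityK -?pq_marg.
Qed.

Lemma integral_cond_mean p x :
  (@lebesgue_measure R).-integrable setT (fun y => (y * p x y)%:E) ->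
  fine (marginal_density p x) != 0%R ->
  \int[lebesgue_measure]_y (y * p x y)%:E =
    (cond_mean p x * fine (marginal_density p x))%:E.
Proof.
move=> ip m_neq0; rewrite /cond_mean divfK // fineK //.
exact: (integrable_fin_num _ ip).
Qed.

Lemma eq_mean_y p q : has_mean_y p -> has_mean_y q ->
  {ae vol R d, forall x, \int[lebesgue_measure]_y (y * p x y)%:E =
                         \int[lebesgue_measure]_y (y * q x y)%:E} ->
  mean_y p = mean_y q.
Proof.
move=> ip iq pq; rewrite /mean_y (vol_fubini ip) (vol_fubini iq).
apply: ae_eq_integral => //; [exact: measurable_vol_fubini_F ip|
                              exact: measurable_vol_fubini_F iq|].
by apply: filterS pq => x + _.
Qed.

End Marginals.

Section Gibbs.
Variable R : realType.
Implicit Types g : R -> R.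

Definition partition g : \bar R := \int[lebesgue_measure]_t (expR (g t))%:E.

Definition gibbs g (y : R) : R := (expR (g y) / fine (partition g))%R.

(* No integrability is needed: if the partition function is infinite, both
   sides are [0]. *)
Lemma gibbs_shift g a :
  measurable_fun setT g -> gibbs (fun y => g y + a)%R = gibbs g.
Proof.
move=> mg; apply/funext => y; rewrite /gibbs.
have -> : partition (fun y => g y + a)%R = (expR a)%:E * partition g.
  rewrite -ge0_integralZl_EFin ?expR_ge0 //; last first.
    exact/measurable_EFinP/measurableT_comp.
  by apply: eq_integral => t _; rewrite expRD mulrC.
rewrite expRD; case: (partition g) => [r||] /=.
- by rewrite invfM mulrA mulfK // gt_eqF ?expR_gt0.
- by rewrite gt0_muley ?lte_fin ?expR_gt0 //= !invr0 !mulr0.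
- by rewrite gt0_muleNy ?lte_fin ?expR_gt0 //= !invr0 !mulr0.
Qed.

Lemma gibbs_eq_sub_const g1 g2 :
  fine (partition g1) != 0%R -> fine (partition g2) != 0%R ->
  gibbs g1 =1 gibbs g2 -> forall y, (g1 y - g2 y = g1 0 - g2 0)%R.
Proof.
move=> Z1_neq0 Z2_neq0 g12.
have E y : expR (g1 y - g2 y) = (fine (partition g1) / fine (partition g2))%R.
  move/eqP: (g12 y); rewrite /gibbs eqr_div // => /eqP g12y.
  by apply/eqP; rewrite expRB eqr_div ?(gt_eqF (expR_gt0 _)) // g12y mulrC.
by move=> y; apply: expR_inj; rewrite !E.
Qed.

End Gibbs.

Section Identification.
Variables (R : realType) (d : nat).
Implicit Types p q : Rn R d -> R -> R.

Lemma condition3_of_eq_mean_y (c : R) (D : (Rn R d -> R -> R) -> Prop) :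
  (0 < c)%R ->
  (forall p q S, D p -> D q -> has_mean_y p -> has_mean_y q ->
     same_marginal p q -> measurable S -> vol R d S != 0 ->
     (forall x y, S x -> p x y = q x y) -> mean_y p = mean_y q) ->
  condition3 c D.
Proof.
move=> c_gt0 eq_mean p q Dp Dq ip iq neq.
have [pq_marg|] := pselect (same_marginal p q); last by left.
right => -[S [mS [cS pq_S]]]; apply: neq; apply: eq_mean pq_S => //.
by rewrite gt_eqF // (lt_le_trans _ cS) // lte_fin.
Qed.

Lemma poly_expectation_eq_mean_y p q S :
  poly_expectation_class p -> poly_expectation_class q ->
  has_mean_y p -> has_mean_y q -> same_marginal p q ->
  measurable S -> vol R d S != 0 -> (forall x y, S x -> p x y = q x y) ->
  mean_y p = mean_y q.
Proof.
move=> [p_dens [p_supp [fp [fp_poly p_cm]]]].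
move=> [q_dens [q_supp [fq [fq_poly q_cm]]]].
move=> p_mean q_mean pq_marg mS S_neq0 pq_S.
have fpq x : fp x = fq x.
  apply/eqP; rewrite -subr_eq0; apply/eqP; move: x.
  apply: is_poly_ae_zero (is_poly_sub fp_poly fq_poly) mS S_neq0 _.
  apply: filterS2 p_cm q_cm => x [_ <-] [_ <-] Sx.
  by rewrite /cond_mean /marginal_density (funext (pq_S x ^~ Sx)) subrr.
apply: eq_mean_y p_mean q_mean _.
have pq_reg := same_marginal_ae_pos p_dens q_dens p_supp pq_marg.
apply: filterS3 p_cm q_cm pq_reg => x [ip cmp] [iq cmq] [mpq m_gt0].
rewrite (integral_cond_mean ip (lt0r_neq0 m_gt0)) (integral_cond_mean iq).
  by rewrite cmp cmq fpq mpq.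
by rewrite -mpq lt0r_neq0.
Qed.

Lemma cond_density_gibbs_partition_neq0 p x (g : R -> R) :
  (0 < fine (marginal_density p x))%R -> cond_density p x =1 gibbs g ->
  fine (partition g) != 0%R.
Proof.
move=> m_gt0 pg; have m_neq0 := lt0r_neq0 m_gt0.
apply: contraTneq m_gt0 => Z0.
have p0 y : p x y = 0%R.
  by rewrite -(cond_densityK y m_neq0) pg /gibbs Z0 invr0 mulr0 mul0r.
by rewrite /marginal_density integral0_eq ?ltxx // => y _; rewrite p0.
Qed.

Lemma cond_density_gibbs_sub_const p x (g1 g2 : R -> R) :
  (0 < fine (marginal_density p x))%R ->
  cond_density p x =1 gibbs g1 -> cond_density p x =1 gibbs g2 ->
  forall y, (g1 y - g2 y = g1 0 - g2 0)%R.
Proof.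
move=> m_gt0 pg1 pg2; apply: gibbs_eq_sub_const.
- exact: cond_density_gibbs_partition_neq0 m_gt0 pg1.
- exact: cond_density_gibbs_partition_neq0 m_gt0 pg2.
- by move=> y; rewrite -pg1 pg2.
Qed.

Lemma poly_logdensity_eq_mean_y p q S :
  poly_logdensity_class p -> poly_logdensity_class q ->
  has_mean_y p -> has_mean_y q -> same_marginal p q ->
  measurable S -> vol R d S != 0 -> (forall x y, S x -> p x y = q x y) ->
  mean_y p = mean_y q.
Proof.
move=> [p_dens [p_supp [fp [fp_poly [_ p_gibbs]]]]].
move=> [q_dens [q_supp [fq [fq_poly [_ q_gibbs]]]]].
move=> p_mean q_mean pq_marg mS S_neq0 pq_S.
pose gp x y := fp (x, y); pose gq x y := fq (x, y).
have good : {ae vol R d, forall x, [/\ cond_density p x =1 gibbs (gp x),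
    cond_density q x =1 gibbs (gq x), marginal_density p x = marginal_density q x
    & (0 < fine (marginal_density p x))%R]}.
  have pq_reg := same_marginal_ae_pos p_dens q_dens p_supp pq_marg.
  by apply: filterS3 p_gibbs q_gibbs pq_reg => x pg qg [].
pose h z := (fp z - fq z)%R.
have h_const : forall x y, h (x, y) = h (x, 0%R).
  apply: is_poly_ae_const_snd (is_poly_sub fp_poly fq_poly) mS S_neq0 _.
  apply: filterS good => x [pg qg _ m_gt0] Sx.
  apply: cond_density_gibbs_sub_const m_gt0 pg _ => y.
  by rewrite -qg /cond_density /marginal_density (funext (pq_S x ^~ Sx)).
apply: eq_mean_y p_mean q_mean _; apply: filterS good => x [pg qg mpq m_gt0].
suff pq : p x =1 q x by apply: eq_integral => y _; rewrite pq.
apply: eq_cond_density mpq m_gt0 _ => y; rewrite pg qg.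
have -> : gp x = (fun t => gq x t + h (x, 0%R))%R.
  by apply/funext => t; rewrite -(h_const x t) /h addrC subrK.
rewrite gibbs_shift //.
exact: measurable_fun_pair2 (measurable_poly fq_poly).
Qed.

End Identification.

Theorem lemma4p6 (R : realType) (d : nat) (c : R) :
  (0 < c)%R -> (c < 1 / 2)%R ->
  condition3 c (@poly_logdensity_class R d) /\
  condition3 c (@poly_expectation_class R d).
Proof.
move=> c_gt0 _; split; apply: condition3_of_eq_mean_y => // p q S.
  exact: poly_logdensity_eq_mean_y.
exact: poly_expectation_eq_mean_y.
Qed.
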